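(* Let $A, B \in \mathbb{R}^{n\times n}_+$ be entrywise nonnegative Schur-stable matrices, and assume at least one of $A$, $B$ is irreducible. Suppose there exists a vector $v\in\mathbb{R}^n$ with all entries strictly positive such that (1) $v^TA\le v^T$ and $v^TB\le v^T$ (entrywise), and (2) every entry of $v^T(A+B)$ is strictly less than the corresponding entry of $2v^T$. Let $\mathcal{D}_{A,B}$ be the set of diagonal matrices $D\in\mathbb{R}^{n\times n}$ with nonnegative diagonal entries such that $A-D$ and $B-D$ are both entrywise nonnegative. Then for every $D\in\mathcal{D}_{A,B}$ the matrix $$M=\begin{pmatrix} A-D & D\\ D & B-D\end{pmatrix}$$ is Schur-stable.
   Context: A real square matrix is Schur-stable if its spectral radius is strictly less than $1$. A matrix $A\in\mathbb{R}^{n\times n}$ is reducible if there exist nonempty disjoint sets $I,J$ with $I\cup J=\{1,\dots,n\}$ such that $a_{ij}=0$ for all $i\in I$, $j\in J$; otherwise it is irreducible. $\mathbb{R}^{n\times n}_+$ denotes the set of entrywise nonnegative $n\times n$ real matrices. A vector $v$ as in the hypothesis is said to define a joint linear copositive Lyapunov function $V(x)=v^Tx$ for $A,B$. *)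

(* Real matrices over an arbitrary realType R (a model of the reals);
   eigenvalues are taken in the algebraic closure complex R = R[i]. *)
From HB Require Import structures.
From mathcomp Require Import all_boot all_order all_algebra.
From mathcomp Require Import complex.
From mathcomp Require Import reals.
Set Implicit Arguments. Unset Strict Implicit. Unset Printing Implicit Defensive.
Import Order.TTheory GRing.Theory Num.Theory.
Local Open Scope ring_scope.

Definition schur_stable (R : realType) (n : nat) (A : 'M[R]_n) : Prop :=
  forall z : R[i], root (char_poly (map_mx (fun x : R => x%:C%C) A)) z -> `|z| < 1.

(* Reducibility as in the paper: there are nonempty disjoint I, J covering
   {1..n} (J = complement of I) with a_ij = 0 for all i in I, j in J. *)
Definition reducible (R : realType) (n : nat) (A : 'M[R]_n) : Prop :=
  exists I : {set 'I_n}, [/\ I != set0, I != setT &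
    forall i j, i \in I -> j \notin I -> A i j = 0].

Definition irreducible (R : realType) (n : nat) (A : 'M[R]_n) : Prop :=
  ~ reducible A.

Definition nonneg_mx (R : realType) (m n : nat) (A : 'M[R]_(m, n)) : Prop :=
  forall i j, 0 <= A i j.

From HB Require Import structures.
From mathcomp Require Import all_boot all_order all_algebra.
From mathcomp Require Import complex.
From mathcomp Require Import reals.
From mathcomp Require Import lra.
Set Implicit Arguments. Unset Strict Implicit. Unset Printing Implicit Defensive.
Import Order.TTheory GRing.Theory Num.Theory.
Local Open Scope ring_scope.

(* Suppose M has an eigenvalue z with |z| >= 1 and eigenvector x.  Since M is
   nonnegative, y := |x| satisfies y <= M y.  Pairing with w = (v, v), for
   which w M = (v A, v B) <= w, forces M y = y and (v - v A) y1 + (v - v B) y2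
   = 0; the strict inequality v (A + B) < 2 v then makes the supports of y1 and
   y2 disjoint.  On disjoint supports the diagonal coupling D decouples, so
   A y1 = y1 and B y2 = y2, and whichever half is nonzero exhibits the
   eigenvalue 1 of A or B, contradicting Schur stability. *)

Local Notation cmx M := (map_mx (fun x => x%:C%C) M).

Lemma char_poly_trmx (F : comNzRingType) n (A : 'M[F]_n) :
  char_poly A^T = char_poly A.
Proof.
rewrite /char_poly -det_tr; congr (\det _).
by apply/matrixP => i j; rewrite !mxE eq_sym.
Qed.

Lemma root_char_polyP (F : fieldType) n (A : 'M[F]_n) a :
  root (char_poly A) a <-> exists2 u : 'cV_n, u != 0 & A *m u = a *: u.
Proof.
rewrite -char_poly_trmx -eigenvalue_root_char; split.
- case/eigenvalueP => u uA u0; exists u^T; first by rewrite trmx_eq0.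
  by rewrite -[A]trmxK -trmx_mul uA linearZ.
- case=> u u0 Au; apply/eigenvalueP; exists u^T; last by rewrite trmx_eq0.
  by rewrite -trmx_mul Au linearZ.
Qed.

Lemma schur_stable_fixed_eq0 (R : realType) n (A : 'M[R]_n) (u : 'cV[R]_n) :
  schur_stable A -> A *m u = u -> u = 0.
Proof.
move=> sA Au; apply/eqP; apply: contraT => u0.
have : root (char_poly (cmx A)) 1.
  apply/root_char_polyP; exists (cmx u); first by rewrite map_mx_eq0.
  by rewrite -map_mxM Au scale1r.
by move/sA; rewrite normr1 ltxx.
Qed.

Lemma is_diag_mulmxE (V : pzSemiRingType) m n (D : 'M[V]_m) (u : 'M[V]_(m, n))
    i j :
  is_diag_mx D -> (D *m u) i j = D i i * u i j.
Proof.
move/is_diag_mxP => dD; rewrite mxE (bigD1 i) //= big1 ?addr0 // => k ki.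
by rewrite dD ?mul0r // eq_sym.
Qed.

Section RowColumnBlocks.
Variable T : Type.
Variable P : T -> Prop.

Lemma row_mx_forall m n1 n2 (A1 : 'M[T]_(m, n1)) (A2 : 'M[T]_(m, n2)) :
  (forall i j, P (A1 i j)) -> (forall i j, P (A2 i j)) ->
  forall i j, P (row_mx A1 A2 i j).
Proof.
move=> h1 h2 i j; rewrite -(splitK j); case: (split j) => k /=.
- by rewrite row_mxEl.
- by rewrite row_mxEr.
Qed.

Lemma col_mx_forall m1 m2 n (A1 : 'M[T]_(m1, n)) (A2 : 'M[T]_(m2, n)) :
  (forall i j, P (A1 i j)) -> (forall i j, P (A2 i j)) ->
  forall i j, P (col_mx A1 A2 i j).
Proof.
move=> h1 h2 i j; rewrite -(splitK i); case: (split i) => k /=.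
- by rewrite col_mxEu.
- by rewrite col_mxEd.
Qed.

End RowColumnBlocks.

(* |x| <= |z| |x| = |K x| <= K |x| by the triangle inequality. *)
Lemma norm_eigvec_subinvariant (R : realType) n (K : 'M[R]_n) z :
  nonneg_mx K -> root (char_poly (cmx K)) z -> 1 <= `|z| ->
  exists2 y : 'cV[R]_n, y != 0 /\ nonneg_mx y &
    forall i, y i 0 <= (K *m y) i 0.
Proof.
move=> nnK /root_char_polyP [x x0 Kx] z1.
set y := map_mx (fun c => complex.Re `|c|) x.
have yE k j : (y k j)%:C%C = `|x k j| by rewrite mxE RRe_real ?normr_real.
exists y.
  split=> [|k j]; last by rewrite -ler0c yE.
  apply: contra x0 => /eqP y0; apply/eqP/matrixP => k j.
  by have := yE k j; rewrite y0 !mxE => /esym/eqP; rewrite normr_eq0 => /eqP.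
move=> i; rewrite -lecR yE mxE rmorph_sum /=.
apply: (@le_trans _ _ `|(cmx K *m x) i 0|).
  by rewrite Kx mxE normrM ler_peMl.
rewrite mxE; apply: le_trans (ler_norm_sum _ _ _) _; apply: ler_sum => j _.
by rewrite rmorphM /= yE normrM mxE ger0_norm ?ler0c.
Qed.

Section NonnegativeMatrices.
Variable R : realType.

Lemma mulmx_nonneg m n p (K : 'M[R]_(m, n)) (L : 'M[R]_(n, p)) :
  nonneg_mx K -> nonneg_mx L -> nonneg_mx (K *m L).
Proof. by move=> nnK nnL i j; rewrite mxE sumr_ge0 // => k _; rewrite mulr_ge0. Qed.

Lemma nonneg_dot_eq0 n (a : 'rV[R]_n) (b : 'cV[R]_n) :
  nonneg_mx a -> nonneg_mx b -> (a *m b) 0 0 = 0 -> forall j, a 0 j * b j 0 = 0.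
Proof.
move=> nna nnb; rewrite mxE => ab0 j.
by apply: (psumr_eq0P _ ab0) => // k _; rewrite mulr_ge0.
Qed.

(* A subinvariant vector y of K is invariant as soon as some positive w is
   superinvariant: w (K y - y) and (w - w K) y are nonnegative and sum to 0. *)
Lemma subinvariant_fixed n (w : 'rV[R]_n) (K : 'M[R]_n) (y : 'cV[R]_n) :
  (forall j, 0 < w 0 j) -> nonneg_mx (w - w *m K) -> nonneg_mx y ->
  (forall i, y i 0 <= (K *m y) i 0) ->
  K *m y = y /\ ((w - w *m K) *m y) 0 0 = 0.
Proof.
move=> wpos nnwK nny Ky.
have nnw : nonneg_mx w by move=> i j; rewrite (ord1 i) ltW.
have nnKy : nonneg_mx (K *m y - y).
  by move=> i j; rewrite (ord1 j) mxE [(- y) _ _]mxE subr_ge0.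
have sum0 : (w *m (K *m y - y)) 0 0 + ((w - w *m K) *m y) 0 0 = 0.
  have e : w *m (K *m y - y) + (w - w *m K) *m y = 0.
    by rewrite mulmxBr mulmxBl mulmxA addrA subrK subrr.
  by move/matrixP: e => /(_ 0 0); rewrite !mxE.
move/eqP: sum0; rewrite paddr_eq0 ?mulmx_nonneg // => /andP[/eqP e1 /eqP ->].
split=> //; apply/matrixP => i j; rewrite (ord1 j); apply/eqP.
have /eqP := nonneg_dot_eq0 nnw nnKy e1 i.
by rewrite mulf_eq0 gt_eqF //= !mxE subr_eq0.
Qed.

Lemma disjoint_supports n (v : 'rV[R]_n) (A B : 'M[R]_n) (y1 y2 : 'cV[R]_n) :
  (forall j, (v *m (A + B)) 0 j < 2 * v 0 j) ->
  nonneg_mx (v - v *m A) -> nonneg_mx (v - v *m B) ->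
  nonneg_mx y1 -> nonneg_mx y2 ->
  ((v - v *m A) *m y1) 0 0 + ((v - v *m B) *m y2) 0 0 = 0 ->
  forall j, y1 j 0 = 0 \/ y2 j 0 = 0.
Proof.
move=> vAB nnA nnB nny1 nny2.
move/eqP; rewrite paddr_eq0 ?mulmx_nonneg // => /andP[/eqP e1 /eqP e2] j.
have := nonneg_dot_eq0 nnA nny1 e1 j; have := nonneg_dot_eq0 nnB nny2 e2 j.
have := vAB j; rewrite mulmxDr.
move: (v *m A) (v *m B) => vA vB; rewrite !mxE => hAB /eqP + /eqP.
rewrite !mulf_eq0 => /orP[/eqP hB | /eqP ->]; last by right.
case/orP => [/eqP hA | /eqP ->]; [lra | by left].
Qed.

Lemma diag_coupled_fixed n (A B D : 'M[R]_n) (y1 y2 : 'cV[R]_n) :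
  is_diag_mx D -> (forall i, 0 <= D i i) ->
  nonneg_mx (A - D) -> nonneg_mx (B - D) -> nonneg_mx y1 -> nonneg_mx y2 ->
  (forall j, y1 j 0 = 0 \/ y2 j 0 = 0) ->
  (A - D) *m y1 + D *m y2 = y1 -> D *m y1 + (B - D) *m y2 = y2 ->
  A *m y1 = y1.
Proof.
move=> dD D0 nnAD nnBD nny1 nny2 supp e1 e2.
apply/matrixP => j k; rewrite (ord1 k).
have addE (M N : 'cV[R]_n) : (M + N) j 0 = M j 0 + N j 0 by rewrite mxE.
move/matrixP: e1 => /(_ j 0); move/matrixP: e2 => /(_ j 0).
have -> : A *m y1 = (A - D) *m y1 + D *m y1 by rewrite -mulmxDl subrK.
rewrite !addE !(is_diag_mulmxE _ _ _ dD).
have := mulmx_nonneg nnAD nny1 j 0; have := mulmx_nonneg nnBD nny2 j 0.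
have := mulr_ge0 (D0 j) (nny1 j 0); have := mulr_ge0 (D0 j) (nny2 j 0).
by case: (supp j) => ->; rewrite mulr0; lra.
Qed.

Lemma coupled_block_subinvariant n (A B D : 'M[R]_n) (v : 'rV[R]_n)
    (y : 'cV[R]_(n + n)) :
  is_diag_mx D -> (forall i, 0 <= D i i) ->
  nonneg_mx (A - D) -> nonneg_mx (B - D) ->
  (forall j, 0 < v 0 j) -> nonneg_mx (v - v *m A) -> nonneg_mx (v - v *m B) ->
  (forall j, (v *m (A + B)) 0 j < 2 * v 0 j) ->
  nonneg_mx y -> (forall i, y i 0 <= (block_mx (A - D) D D (B - D) *m y) i 0) ->
  A *m usubmx y = usubmx y /\ B *m dsubmx y = dsubmx y.
Proof.
move=> dD D0 nnAD nnBD vpos nnvA nnvB vAB nny suby.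
set y1 := usubmx y; set y2 := dsubmx y; set w := row_mx v v.
have wM : w *m block_mx (A - D) D D (B - D) = row_mx (v *m A) (v *m B).
  by rewrite mul_row_block !mulmxBr !subrK addrC !subrK.
have wpos : forall j, 0 < w 0 j.
  by move=> j; apply: (row_mx_forall (P := fun x => 0 < x)) => i k;
    rewrite (ord1 i).
have nnwM : nonneg_mx (w - w *m block_mx (A - D) D D (B - D)).
  rewrite wM opp_row_mx add_row_mx.
  exact: (row_mx_forall (P := fun x => 0 <= x)).
have [My] := subinvariant_fixed wpos nnwM nny suby.
rewrite wM opp_row_mx add_row_mx -(vsubmxK y) -/y1 -/y2 mul_row_col mxE => Qy.
have nny1 : nonneg_mx y1 by move=> i j; rewrite mxE.
have nny2 : nonneg_mx y2 by move=> i j; rewrite mxE.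
have supp := disjoint_supports vAB nnvA nnvB nny1 nny2 Qy.
move: My; rewrite -(vsubmxK y) -/y1 -/y2 mul_block_col => /eq_col_mx[e1 e2].
split; first exact: (diag_coupled_fixed dD D0 nnAD nnBD nny1 nny2 supp e1 e2).
apply: (diag_coupled_fixed dD D0 nnBD nnAD nny2 nny1); rewrite 1?addrC //.
by move=> j; rewrite or_comm.
Qed.

End NonnegativeMatrices.

Theorem theorem3 (R : realType) (n : nat) (A B : 'M[R]_n) :
  nonneg_mx A -> nonneg_mx B ->
  schur_stable A -> schur_stable B ->
  irreducible A \/ irreducible B ->
  (exists v : 'rV[R]_n,
      (forall i, 0 < v 0 i) /\
      (forall j, (v *m A) 0 j <= v 0 j) /\
      (forall j, (v *m B) 0 j <= v 0 j) /\
      (forall j, (v *m (A + B)) 0 j < 2 * v 0 j)) ->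
  forall D : 'M[R]_n,
    is_diag_mx D -> (forall i, 0 <= D i i) ->
    nonneg_mx (A - D) -> nonneg_mx (B - D) ->
    schur_stable (block_mx (A - D) D D (B - D)).
Proof.
move=> _ _ sA sB _ [v [vpos [vA [vB vAB]]]] D dD D0 nnAD nnBD z rz.
rewrite real_ltNge ?normr_real //; apply/negP => z1.
have nnD : nonneg_mx D.
  by move=> i j; case: (eqVneq i j) => [-> // | ij]; move/is_diag_mxP: dD => ->.
have nnM : nonneg_mx (block_mx (A - D) D D (B - D)).
  apply: (col_mx_forall (P := fun x => 0 <= x));
    exact: (row_mx_forall (P := fun x => 0 <= x)).
have [y [y0 nny] suby] := norm_eigvec_subinvariant nnM rz z1.
have nnvA : nonneg_mx (v - v *m A).
  by move=> i j; rewrite (ord1 i) mxE [(- (v *m A)) _ _]mxE subr_ge0.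
have nnvB : nonneg_mx (v - v *m B).
  by move=> i j; rewrite (ord1 i) mxE [(- (v *m B)) _ _]mxE subr_ge0.
have [Ay By] :=
  coupled_block_subinvariant dD D0 nnAD nnBD vpos nnvA nnvB vAB nny suby.
move: y0; rewrite -(vsubmxK y).
by rewrite (schur_stable_fixed_eq0 sA Ay) (schur_stable_fixed_eq0 sB By) col_mx0 eqxx.
Qed.
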